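(* Let $n\ge 2$, $a,b,c\in\mathbb{Z}_n$, and suppose $(\mathbb{Z}_n,* )$ with $x*y=ax+by+c$ is a quasigroup. Then, for $1\le k<n$, $(\mathbb{Z}_n,* )$ is $k$-translatable with respect to the ordering $0,1,\dots,n-1$ if and only if $a+kb\equiv 0\pmod n$.
   Context: A finite groupoid with ordering $q_1,\dots,q_n$ is $k$-translatable ($1\le k<n$) with respect to this ordering if $q_i* q_j=q_{i-1}* q_{j-k}$ for all $i\in\{2,\dots,n\}$, $j\in\{1,\dots,n\}$, indices taken modulo $n$ in $\{1,\dots,n\}$ (each Cayley-table row is the previous row with its last $k$ entries moved to the front). *)

From mathcomp Require Import ssreflect ssrfun ssrbool eqtype ssrnat seq choice fintype div.
Set Implicit Arguments. Unset Strict Implicit. Unset Printing Implicit Defensive.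

(* A finite groupoid on {0,...,n-1} (= 'I_n), with the ordering
   q_1, ..., q_n given by q_i = i - 1.  We use 0-based indices. *)

Definition is_quasigroup (T : finType) (op : T -> T -> T) : Prop :=
  forall u v : T, (exists! x, op u x = v) /\ (exists! y, op y u = v).

(* k-translatable w.r.t. the ordering q_1 = 0, ..., q_n = n-1:
   q_i * q_j = q_{i-1} * q_{j-k} for i in {2..n}, j in {1..n}, indices mod n. *)
Definition k_translatable (n k : nat) (op : 'I_n -> 'I_n -> 'I_n) : Prop :=
  forall (i j : 'I_n) (i' j' : 'I_n),
    0 < i -> nat_of_ord i' = i.-1 -> nat_of_ord j' = (j + n - k) %% n ->
    op i j = op i' j'.

Definition lin_op (n : nat) (Hn : 0 < n) (a b c : 'I_n) (x y : 'I_n) : 'I_n :=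
  Ordinal (ltn_pmod (a * x + b * y + c) Hn).

From mathcomp Require Import ssreflect ssrfun ssrbool eqtype ssrnat seq choice fintype div.
From mathcomp Require Import zify.

(* Moving one row down and k columns to the left changes [a x + b y + c] by
   exactly [a + k b] modulo [n], so the Cayley table is k-translatable iff this
   increment vanishes. *)

Lemma modn_subDK (n k j : nat) : k <= n -> (j + n - k) %% n + k = j %[mod n].
Proof.
move=> le_kn; rewrite modnDml subnK ?modnDr //.
exact: leq_trans le_kn (leq_addl _ _).
Qed.

Lemma lin_row_shift (n a b c k p j : nat) : k <= n ->
  a * p.+1 + b * j + c = a * p + b * ((j + n - k) %% n) + c + (a + k * b) %[mod n].
Proof.
move=> le_kn.
have -> : a * p + b * ((j + n - k) %% n) + c + (a + k * b)
          = a * p.+1 + c + b * ((j + n - k) %% n + k).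
  by rewrite mulnS mulnDr [k * b]mulnC; lia.
rewrite -[in RHS]modnDmr -modnMmr modn_subDK // modnMmr modnDmr.
by congr (_ %% _); lia.
Qed.

Lemma lin_op_shift {n : nat} (Hn : 0 < n) (a b c : 'I_n) (k : nat) (i j i' j' : 'I_n) :
  k <= n -> 0 < i -> i' = i.-1 :> nat -> j' = (j + n - k) %% n :> nat ->
  lin_op Hn a b c i j = lin_op Hn a b c i' j' + (a + k * b) %[mod n].
Proof.
move=> le_kn i_gt0 Ei' Ej'; rewrite /= Ej' modn_mod modnDml.
move: (i : nat) i_gt0 Ei' => [|p] // _ ->.
exact: (lin_row_shift n a b c k p j le_kn).
Qed.

Theorem lemma9p1 (n : nat) (Hn2 : 2 <= n) (a b c : 'I_n) (k : nat) :
  let Hn : 0 < n := ltnW Hn2 in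
  is_quasigroup (lin_op Hn a b c) ->
  1 <= k < n ->
  (k_translatable k (lin_op Hn a b c) <-> (a + k * b) %% n = 0).
Proof.
move=> Hn _ /andP[_ lt_kn]; have le_kn := ltnW lt_kn.
split=> [transl | incr0 i j i' j' i_gt0 Ei Ej].
- pose j' := Ordinal (ltn_pmod (0 + n - k) Hn).
  have := lin_op_shift Hn a b c k (Ordinal Hn2) (Ordinal Hn) (Ordinal Hn) j' le_kn.
  rewrite (transl _ _ (Ordinal Hn) j') // => /(_ isT erefl erefl) /eqP.
  by rewrite -[X in X %% _ == _]addn0 eqn_modDl mod0n => /eqP.
- apply: val_inj; have := lin_op_shift Hn a b c k i j i' j' le_kn i_gt0 Ei Ej.
  by rewrite -[in X in _ = X]modnDmr incr0 addn0 !modn_small.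
Qed.
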